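(* Let $A,B\in S(2n,\mathbb{R})$, let $\{v_1,\dots,v_{2n}\}$ be a symplectic basis for $A$ and $\{w_1,\dots,w_{2n}\}$ a symplectic basis for $B$. If $v_i^TJv_j = w_i^TJw_j$ for all $1\le i<j\le 2n$ (equality of the ordered tuples of basis-values), then there exists $P\in\operatorname{Sp}(2n)$ with $A = P^TBP$.
   Context: $S(2n,\mathbb{R})$ is the set of invertible skew-symmetric real $2n\times2n$ matrices; $J$ is block-diagonal with $n$ blocks $J_0 = \begin{bmatrix} 0 & 1 \\ -1 & 0\end{bmatrix}$; $\operatorname{Sp}(2n) = \{P : P^TJP = J\}$. A basis $\{v_1,\dots,v_{2n}\}$ of $\mathbb{R}^{2n}$ is a symplectic basis for $A$ if $v_{2i-1}^TAv_{2i} = 1$ for $1\le i\le n$ and $v_i^TAv_j = 0$ for all $i<j$ with $(i,j)\neq(2k-1,2k)$ for every $k$. *)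

From HB Require Import structures.
From mathcomp Require Import all_boot all_order all_algebra.
From mathcomp Require Import reals.
Set Implicit Arguments. Unset Strict Implicit. Unset Printing Implicit Defensive.
Import Order.TTheory GRing.Theory Num.Theory.
Local Open Scope ring_scope.

(* Indices are 0-based: i : 'I_(2*n) stands for the paper's index i+1.
   The paper's pair (2k-1, 2k) (1-based) becomes (2k, 2k+1) (0-based). *)

Definition bform (R : realType) (m : nat) (M : 'M[R]_m) (x y : 'cV[R]_m) : R :=
  (x^T *m M *m y) 0 0.

(* J = block-diagonal with n blocks J0 = [[0,1],[-1,0]] *)
Definition Jmx (R : realType) (n : nat) : 'M[R]_(2 * n) :=
  \matrix_(i, j)
    (if ~~ odd i && (j == i.+1 :> nat) then 1
     else if ~~ odd j && (i == j.+1 :> nat) then -1 else 0).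

Definition inS (R : realType) (n : nat) (A : 'M[R]_(2 * n)) : Prop :=
  A^T = - A /\ A \in unitmx.

Definition inSp (R : realType) (n : nat) (P : 'M[R]_(2 * n)) : Prop :=
  P^T *m Jmx R n *m P = Jmx R n.

Definition is_basis (R : realType) (m : nat) (v : 'I_m -> 'cV[R]_m) : Prop :=
  (\matrix_(i, j) v j i 0) \in unitmx.

Definition symplectic_basis (R : realType) (n : nat) (A : 'M[R]_(2 * n))
    (v : 'I_(2 * n) -> 'cV[R]_(2 * n)) : Prop :=
  is_basis v /\
  forall i j : 'I_(2 * n), (i < j)%N ->
    bform A (v i) (v j) = (if ~~ odd i && (j == i.+1 :> nat) then 1 else 0).

From HB Require Import structures.
From mathcomp Require Import all_boot all_order all_algebra.
From mathcomp Require Import reals.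
From mathcomp Require Import zify.
Set Implicit Arguments. Unset Strict Implicit. Unset Printing Implicit Defensive.
Import Order.TTheory GRing.Theory Num.Theory.
Local Open Scope ring_scope.

(* With V and W the matrices whose columns are the two bases, the hypotheses
   say that the Gram matrices V^T A V, W^T B W agree above the diagonal, and so
   do V^T J V, W^T J W.  All four are skew-symmetric, hence V^T A V = W^T B W and
   V^T J V = W^T J W, and P := W V^-1 transports both forms: P^T B P = A and
   P^T J P = J. *)

Definition basis_mx (R : realType) (m : nat) (v : 'I_m -> 'cV[R]_m) : 'M[R]_m :=
  \matrix_(i, j) v j i 0.

Definition gram_mx (R : realType) (m : nat) (M : 'M[R]_m)
    (v : 'I_m -> 'cV[R]_m) : 'M[R]_m :=
  \matrix_(i, j) bform M (v i) (v j).

Lemma gram_mxE (R : realType) (m : nat) (M : 'M[R]_m) (v : 'I_m -> 'cV[R]_m) :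
  (basis_mx v)^T *m M *m basis_mx v = gram_mx M v.
Proof.
apply/matrixP => i j; rewrite /gram_mx /basis_mx /bform !mxE.
apply: eq_bigr => k _.
by rewrite !mxE; congr (_ * _); apply: eq_bigr => l _; rewrite !mxE.
Qed.

Lemma trmx_congr_skew (R : comNzRingType) (m : nat) (M Q : 'M[R]_m) :
  M^T = - M -> (Q^T *m M *m Q)^T = - (Q^T *m M *m Q).
Proof. by move=> skM; rewrite !trmx_mul trmxK skM mulNmx mulmxN mulmxA. Qed.

Lemma gram_mx_skew (R : realType) (m : nat) (M : 'M[R]_m) (v : 'I_m -> 'cV[R]_m) :
  M^T = - M -> (gram_mx M v)^T = - gram_mx M v.
Proof. by rewrite -gram_mxE; apply: trmx_congr_skew. Qed.

Lemma skew_mx_eq_upper (R : numDomainType) (m : nat) (M N : 'M[R]_m) :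
  M^T = - M -> N^T = - N ->
  (forall i j : 'I_m, (i < j)%N -> M i j = N i j) -> M = N.
Proof.
have skewE (K : 'M[R]_m) i j : K^T = - K -> K i j = - K j i.
  by move/matrixP/(_ j i); rewrite !mxE.
move=> skM skN eqMN; apply/matrixP => i j.
case: (ltngtP i j) => [ij | ji | /val_inj <-]; first exact: eqMN.
  by rewrite (skewE M) // (skewE N) // eqMN.
have diag0 (K : 'M[R]_m) : K^T = - K -> K i i = 0.
  by move=> skK; apply/eqP; rewrite -eqNr -skewE.
by rewrite !diag0.
Qed.

Lemma Jmx_skew (R : realType) (n : nat) : (Jmx R n)^T = - Jmx R n.
Proof.
apply/matrixP => i j; rewrite !mxE.
case: (boolP (~~ odd i && (j == i.+1 :> nat))) => [/andP[_ /eqP ji] | _].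
  by case: ifP => // /andP[_ /eqP ij]; lia.
by case: ifP; rewrite ?opprK ?oppr0.
Qed.

Lemma congr_mx_invmx (R : comUnitRingType) (m : nat) (M N V W : 'M[R]_m) :
  V \in unitmx -> V^T *m M *m V = W^T *m N *m W ->
  (W *m invmx V)^T *m N *m (W *m invmx V) = M.
Proof.
move=> Vu eqVW.
have congrE (K U : 'M[R]_m) :
    (U *m invmx V)^T *m K *m (U *m invmx V) = (invmx V)^T *m (U^T *m K *m U) *m invmx V.
  by rewrite trmx_mul !mulmxA.
by rewrite congrE -eqVW -congrE mulmxV // trmx1 mul1mx mulmx1.
Qed.

Theorem mainTheorem15 (R : realType) (n : nat) (A B : 'M[R]_(2 * n))
    (v w : 'I_(2 * n) -> 'cV[R]_(2 * n)) :
  inS A -> inS B ->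
  symplectic_basis A v -> symplectic_basis B w ->
  (forall i j : 'I_(2 * n), (i < j)%N ->
     bform (Jmx R n) (v i) (v j) = bform (Jmx R n) (w i) (w j)) ->
  exists P : 'M[R]_(2 * n), inSp P /\ A = P^T *m B *m P.
Proof.
move=> [skA _] [skB _] [Vu symp_v] [_ symp_w] eqJ.
have gramJ : gram_mx (Jmx R n) v = gram_mx (Jmx R n) w.
  apply: skew_mx_eq_upper; rewrite ?gram_mx_skew ?Jmx_skew //.
  by move=> i j ij; rewrite !mxE eqJ.
have gramAB : gram_mx A v = gram_mx B w.
  apply: skew_mx_eq_upper; rewrite ?gram_mx_skew //.
  by move=> i j ij; rewrite !mxE symp_v ?symp_w.
exists (basis_mx w *m invmx (basis_mx v)); split.
  by apply: congr_mx_invmx; rewrite // !gram_mxE.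
by apply/esym/congr_mx_invmx; rewrite // !gram_mxE.
Qed.
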